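(* Let $n=p^{2}q^{2}$ with primes $2\leq p<q$. Let $\mathcal{D}_{S_{1}},\mathcal{D}_{S_{2}}$ be subsets of $\mathcal{D}_{[n]}\setminus\{n\}$. If $\mathrm{Spec}(\mathrm{ICG}(n,\mathcal{D}_{S_{1}}))=\mathrm{Spec}(\mathrm{ICG}(n,\mathcal{D}_{S_{2}}))$, then $\mathcal{D}_{S_{1}}=\mathcal{D}_{S_{2}}$.
   Context: For an integer $n\ge1$, identify $\mathbb{Z}_n$ with $[n]=\{1,\dots,n\}$ ($n$ playing the role of $0$). For a positive divisor $d$ of $n$, $G_n(d)=\{j\in[n]:\gcd(j,n)=d\}$. $\mathcal{D}_{[n]}$ denotes the set of all positive divisors of $n$. For $\mathcal{D}\subseteq\mathcal{D}_{[n]}\setminus\{n\}$, $\mathrm{ICG}(n,\mathcal{D})$ denotes the circulant graph $\mathrm{Cay}(\mathbb{Z}_n,S)$ with connection set $S=\bigcup_{d\in\mathcal{D}}G_n(d)$ (vertex set $\mathbb{Z}_n$, $g\sim h$ iff $h-g\in S$); we write $\mathcal{D}=\mathcal{D}_S$. $\mathrm{Spec}$ denotes the multiset of eigenvalues of the adjacency matrix. *)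

From mathcomp Require Import all_boot all_order all_algebra all_field.
Set Implicit Arguments. Unset Strict Implicit. Unset Printing Implicit Defensive.
Import GRing.Theory Num.Theory.
Local Open Scope ring_scope.

(* Z_n is represented by 'I_n = {0,...,n-1}; the residue 0 plays the role of n
   (gcdn 0 n = n, so 0 lies in G_n(n) as in the paper). *)

Definition Gn (n d : nat) : {set 'I_n} := [set j : 'I_n | gcdn j n == d].

(* connection set S = union of G_n(d), d in D ; divisors d < n are coded in 'I_n *)
Definition ICG_conn (n : nat) (D : {set 'I_n}) : {set 'I_n} :=
  \bigcup_(d in D) Gn n (val d).

Definition ICG_adj (n : nat) (D : {set 'I_n}) : 'M[algC]_n :=
  \matrix_(g < n, h < n)
     (if [exists s in ICG_conn D, val s == (h + n - g) %% n]%N then 1 else 0).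

Definition Spec (n : nat) (A : 'M[algC]_n) : algC -> nat :=
  fun lam => mup lam (char_poly A).

From mathcomp Require Import all_boot all_order all_algebra all_field.
From mathcomp Require Import zify ring lra.
Set Implicit Arguments. Unset Strict Implicit. Unset Printing Implicit Defensive.
Import Order.TTheory GRing.Theory Num.Theory.

(* The Fourier matrix diagonalises every circulant, so the spectrum of
   ICG(n, D) is the multiset of the character sums sum_(s in S) w^(s j).
   For n = p^2 q^2 such a sum only depends on u = min(v_p j, 2) and
   v = min(v_q j, 2): it is sum_(p^i q^k in D) c_(p^(2-i))(p^u) c_(q^(2-k))(q^v)
   with Ramanujan sums c, taken with multiplicity (p^2-p, p-1, 1)_u (q^2-q, q-1, 1)_v.
   So the spectrum is a function of the 3x3 divisor pattern of D, and we show
   that it determines the pattern.  For p >= 3, reducing mod p kills the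
   dependence on u, and the weights q^2-q, q-1, 1 let the residue counts
   recover the eigenvalues mod p, hence (the unknowns being 0/1) three
   relations among the pattern entries; symmetrically mod q; the largest
   eigenvalue, the degree, settles the rest.  For p = 2 the reduction mod 2
   carries no information; instead the eigenvalues are polynomials in q with
   coefficients of size at most 4, so for q >= 11 equal eigenvalues at q are
   equal at q = 11, and the sets of eigenvalues at q = 3, 5, 7, 11 separate the
   256 patterns by computation. *)

(** * Divisors of p^2 q^2 *)

(* [logp2 p j = minn (logn p j) 2] for [j > 0], and [logp2 p 0 = 2] since the
   residue 0 stands for n. *)
Definition logp2 (p j : nat) : nat := if p ^ 2 %| j then 2 else if p %| j then 1 else 0.

Lemma logp2_lt3 p j : logp2 p j < 3.
Proof. by rewrite /logp2; case: ifP => _ //; case: ifP. Qed.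

Lemma logp2_0 p : logp2 p 0 = 2.
Proof. by rewrite /logp2 dvdn0. Qed.

Lemma logp2E p s : prime p -> 0 < s -> logp2 p s = minn (logn p s) 2.
Proof.
move=> p_pr s_gt0; rewrite /logp2 -{2}(expn1 p) !pfactor_dvdn //.
by case: (logn p s) => [|[|l]].
Qed.

Section TwoPrimes.

Variables p q : nat.
Hypotheses (p_pr : prime p) (q_pr : prime q) (p_neq_q : p != q).

Lemma logn_expMexp r a b : logn r (p ^ a * q ^ b) = a * (r == p) + b * (r == q).
Proof. by rewrite lognM ?expn_gt0 ?prime_gt0 // !lognX !logn_prime. Qed.

Lemma expMexp_inj a b c e : p ^ a * q ^ b = p ^ c * q ^ e -> a = c /\ b = e.
Proof.
move=> E; have := congr1 (logn p) E; have := congr1 (logn q) E.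
rewrite !logn_expMexp !eqxx [q == p]eq_sym (negbTE p_neq_q) !muln1 !muln0.
by rewrite !addn0 !add0n.
Qed.

Lemma coprime_expXY a b : coprime (p ^ a) (q ^ b).
Proof. by rewrite coprimeXl // coprimeXr // prime_coprime // dvdn_prime2. Qed.

Lemma gcdn_p2q2 s : gcdn s (p ^ 2 * q ^ 2) = p ^ logp2 p s * q ^ logp2 q s.
Proof.
have [->|s_gt0] := posnP s; first by rewrite gcd0n !logp2_0.
have n_gt0 : 0 < p ^ 2 * q ^ 2 by rewrite muln_gt0 !expn_gt0 !prime_gt0.
apply: eqn_from_log; rewrite ?gcdn_gt0 ?s_gt0 ?muln_gt0 ?expn_gt0 ?prime_gt0 // => r.
rewrite logn_gcd // !logn_expMexp !logp2E //.
case: (eqVneq r p) => [rp|rp]; case: (eqVneq r q) => [rq|rq].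
- by move: p_neq_q; rewrite -rp -rq eqxx.
- by rewrite rp; lia.
- by rewrite rq; lia.
- by lia.
Qed.

Lemma divn_p2q2 a b : a < 3 -> b < 3 ->
  p ^ 2 * q ^ 2 %/ (p ^ a * q ^ b) = p ^ (2 - a) * q ^ (2 - b).
Proof.
move=> a3 b3.
have -> : p ^ 2 * q ^ 2 = (p ^ (2 - a) * q ^ (2 - b)) * (p ^ a * q ^ b).
  by rewrite mulnACA -!expnD !subnK // -ltnS.
by rewrite mulnK // muln_gt0 !expn_gt0 !prime_gt0.
Qed.

Definition divisor_pattern (D : {set 'I_(p ^ 2 * q ^ 2)}) (i k : nat) : bool :=
  [exists d in D, (logp2 p d == i) && (logp2 q d == k)].

Variable D : {set 'I_(p ^ 2 * q ^ 2)}.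
Hypothesis D_dvd : forall d, d \in D -> val d %| p ^ 2 * q ^ 2.

Lemma gcdn_p2q2_divisor d : d \in D -> val d = p ^ logp2 p d * q ^ logp2 q d.
Proof. by move=> dD; rewrite -gcdn_p2q2; apply/esym/gcdn_idPl/D_dvd. Qed.

Lemma mem_ICG_conn s :
  (s \in ICG_conn D) = divisor_pattern D (logp2 p s) (logp2 q s).
Proof.
apply/bigcupP/existsP => [[d dD]|[d /andP[dD /andP[/eqP ep /eqP eq]]]].
  rewrite inE gcdn_p2q2 (gcdn_p2q2_divisor dD) => /eqP /expMexp_inj [ep eq].
  by exists d; rewrite dD ep eq !eqxx.
by exists d; rewrite // inE gcdn_p2q2 -ep -eq -gcdn_p2q2_divisor.
Qed.

Lemma divisor_pattern22 : divisor_pattern D 2 2 = false.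
Proof.
apply/existsP => -[d /andP[dD /andP[/eqP ep /eqP eq]]].
by have := ltn_ord d; rewrite gcdn_p2q2_divisor // ep eq ltnn.
Qed.

Lemma mem_divisor_pattern (d : 'I_(p ^ 2 * q ^ 2)) : val d %| p ^ 2 * q ^ 2 ->
  divisor_pattern D (logp2 p d) (logp2 q d) -> d \in D.
Proof.
move=> d_dvd /existsP[d' /andP[d'D /andP[/eqP ep /eqP eq]]].
have : val d' = val d by rewrite gcdn_p2q2_divisor // ep eq -gcdn_p2q2; apply/gcdn_idPl.
by move/val_inj <-.
Qed.

End TwoPrimes.

Local Open Scope ring_scope.

(** * The spectrum of a circulant graph *)

Lemma sum_expr_root1 (R : idomainType) (z : R) m : z ^+ m = 1 ->
  \sum_(t < m) z ^+ t = if z == 1 then m%:R else 0.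
Proof.
case: eqP => [->|/eqP z1] zm.
  by under eq_bigr do rewrite expr1n; rewrite sumr_const card_ord.
have := subrX1 z m; rewrite zm subrr => /esym/eqP.
by rewrite mulf_eq0 subr_eq0 (negbTE z1) => /eqP.
Qed.

Lemma char_poly_conj_diag (F : fieldType) n (A V : 'M[F]_n) (d : 'rV_n) :
  \det V != 0 -> A *m V = V *m diag_mx d ->
  char_poly A = \prod_(i < n) ('X - (d 0 i)%:P).
Proof.
move=> detV AV.
have E : char_poly_mx A *m map_mx polyC V = map_mx polyC V *m char_poly_mx (diag_mx d).
  by rewrite /char_poly_mx mulmxBl mulmxBr mul_scalar_mx mul_mx_scalar -!map_mxM AV.
have := congr1 determinant E; rewrite !det_mulmx det_map_mx /= => E'.
have detVP : (\det V)%:P != 0 by rewrite polyC_eq0.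
rewrite /char_poly; apply: (mulIf detVP); rewrite E' mulrC; congr (_ * _).
rewrite -/(char_poly (diag_mx d)) char_poly_trig ?diag_mx_is_trig //.
by apply: eq_bigr => i _; rewrite mxE eqxx mulr1n.
Qed.

Section CirculantSpectrum.

Variables (n : nat) (w : algC).
Hypotheses (n_gt0 : (0 < n)%N) (w_prim : n.-primitive_root w).

Definition fourier_mx : 'M[algC]_n := \matrix_(h < n, j < n) w ^+ (h * j).

Lemma subn_addmodK (g s : 'I_n) : (((s + g) %% n + n - g) %% n = s)%N.
Proof.
apply/eqP; rewrite -{2}(modn_small (ltn_ord s)) -(eqn_modDr g) subnK; last first.
  exact: leq_trans (ltnW (ltn_ord g)) (leq_addl _ _).
by rewrite modnDr modn_mod.
Qed.

Definition add_ord (g s : 'I_n) : 'I_n := Ordinal (ltn_pmod (s + g) n_gt0).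

Lemma add_ord_inj g : injective (add_ord g).
Proof.
move=> s1 s2 /(congr1 val) /= /eqP; rewrite eqn_modDr !modn_small // => /eqP.
exact: val_inj.
Qed.

Lemma ICG_adj_fourier (D : {set 'I_n}) :
  ICG_adj D *m fourier_mx =
  fourier_mx *m diag_mx (\row_(j < n) \sum_(s in ICG_conn D) w ^+ (s * j)).
Proof.
apply/matrixP => g j; rewrite mul_mx_diag !mxE (reindex_inj (@add_ord_inj g)) /=.
rewrite mulrC mulr_suml [RHS]big_mkcond; apply: eq_bigr => s _; rewrite !mxE /=.
have -> : [exists s' in ICG_conn D, val s' == ((s + g) %% n + n - g) %% n]%N
          = (s \in ICG_conn D).
  rewrite subn_addmodK; apply/existsP/idP => [[s' /andP[s'S /eqP e]]|sS].
    by rewrite -(val_inj e).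
  by exists s; rewrite sS eqxx.
rewrite -(prim_expr_mod w_prim) modnMml (prim_expr_mod w_prim) mulnDl exprD.
by case: (s \in ICG_conn D); rewrite ?mul1r ?mul0r // mulrC.
Qed.

Lemma dvdn_sub_add (j k : 'I_n) : (n %| n - j + k)%N = (j == k).
Proof.
case: eqVneq => [->|jk]; first by rewrite subnK ?dvdnn // ltnW.
apply/negP => /dvdnP [c E]; have jn := ltn_ord j; have kn := ltn_ord k.
have c1 : c = 1%N by nia.
by move: jk; rewrite -val_eqE /= => /eqP; rewrite c1 mul1n in E; lia.
Qed.

Lemma fourier_mx_inv :
  (\matrix_(j < n, h < n) w ^+ ((n - j) * h)) *m fourier_mx = (n%:R)%:M.
Proof.
apply/matrixP => j k; rewrite !mxE.
rewrite (eq_bigr (fun h : 'I_n => (w ^+ (n - j + k)) ^+ h)); last first.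
  by move=> h _; rewrite !mxE -exprD -exprM mulnDl [(h * k)%N]mulnC.
rewrite sum_expr_root1; last by rewrite -exprM mulnC exprM (prim_expr_order w_prim) expr1n.
by rewrite -(prim_order_dvd w_prim) dvdn_sub_add; case: (j == k).
Qed.

Lemma det_fourier_mx_neq0 : \det fourier_mx != 0.
Proof.
apply/eqP => F0; have := congr1 determinant fourier_mx_inv.
rewrite det_mulmx F0 mulr0 det_scalar => /esym/eqP.
by rewrite expf_eq0 pnatr_eq0 gtn_eqF // andbF.
Qed.

Lemma Spec_ICG_adj (D : {set 'I_n}) z :
  Spec (ICG_adj D) z =
  count_mem z [seq \sum_(s in ICG_conn D) w ^+ (s * j) | j : 'I_n <- enum 'I_n].
Proof.
rewrite /Spec (char_poly_conj_diag det_fourier_mx_neq0 (ICG_adj_fourier D)).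
rewrite -mu_prod_XsubC big_map big_enum /=.
by congr (mup _ _); apply: eq_big => // i _; rewrite mxE.
Qed.

End CirculantSpectrum.

(** * Ramanujan sums and the eigenvalues of ICG(p^2 q^2, D) *)

(* [ramanujan p i u] is the Ramanujan sum c_(p^(2-i))(m) for any m with
   [logp2 p m = u]. *)
Definition ramanujan (p : int) (i u : nat) : int :=
  match i, u with
  | 0%N, 0%N => 0 | 0%N, 1%N => - p | 0%N, _ => p * p - p
  | 1%N, 0%N => -1 | 1%N, _ => p - 1
  | _, _ => 1
  end.
Arguments ramanujan : simpl never.

Definition b2i (b : bool) : int := if b then 1 else 0.

(* Only eight terms: the entry (2, 2) would be the divisor n, which is excluded. *)
Definition eigen_of (a b : nat -> nat -> int) (x : nat -> nat -> bool) (u v : nat) : int :=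
  let T i k := b2i (x i k) * a i u * b k v in
  T 0%N 0%N + T 0%N 1%N + T 0%N 2%N + T 1%N 0%N + T 1%N 1%N + T 1%N 2%N
  + T 2%N 0%N + T 2%N 1%N.

Definition eigen (p q : int) := eigen_of (ramanujan p) (ramanujan q).

Definition pattern_index : seq (nat * nat) :=
  [:: (0, 0); (0, 1); (0, 2); (1, 0); (1, 1); (1, 2); (2, 0); (2, 1)]%N.

Lemma eigen_ofE a b x u v :
  eigen_of a b x u v = \sum_(ik <- pattern_index) b2i (x ik.1 ik.2) * a ik.1 u * b ik.2 v.
Proof. by rewrite !big_cons big_nil /eigen_of addr0 !addrA. Qed.

(* Number of residues m modulo p^2 with [logp2 p m = u]. *)
Definition mult (p u : nat) : nat := match u with 0 => p * p - p | 1 => p - 1 | _ => 1 end%N.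

Definition spec_count (p q : nat) (x : nat -> nat -> bool) (P : pred int) : nat :=
  \sum_(u < 3) \sum_(v < 3) mult p u * mult q v * P (eigen p q x u v).

Lemma sum_dvdn_nat (R : nmodType) e m (F : nat -> R) : (0 < e)%N ->
  \sum_(0 <= s < m * e | (e %| s)%N) F s = \sum_(0 <= t < m) F (t * e)%N.
Proof.
move=> e_gt0; elim: m => [|m IH]; first by rewrite mul0n !big_geq.
rewrite mulSnr (big_cat_nat (n := m * e)) ?leq0n ?leq_addr //= IH big_nat_recr //=.
congr (_ + _); rewrite big_ltn_cond; last by lia.
rewrite dvdn_mull // big_nat_cond big1 ?addr0 // => i /andP[/andP[lo hi] di].
have : (e <= i - m * e)%N by apply: dvdn_leq; [lia | rewrite dvdn_sub // dvdn_mull].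
lia.
Qed.

Lemma sum_dvdn_root n (w : algC) e j : n.-primitive_root w -> (0 < e)%N -> (e %| n)%N ->
  \sum_(s < n) (e %| s)%N%:R * w ^+ (s * j) = if (n %/ e %| j)%N then (n %/ e)%:R else 0.
Proof.
move=> w_prim e_gt0 e_dvd; set m := (n %/ e)%N.
have n_me : n = (m * e)%N by rewrite /m divnK.
transitivity (\sum_(0 <= s < n | (e %| s)%N) w ^+ (s * j)).
  rewrite big_mkord [RHS]big_mkcond; apply: eq_bigr => s _.
  by case: (e %| s)%N; rewrite ?mul1r ?mul0r.
rewrite {1}n_me sum_dvdn_nat // big_mkord.
under eq_bigr do rewrite -mulnA mulnC exprM.
rewrite sum_expr_root1; last first.
  by rewrite -exprM mulnC mulnA -n_me exprM (prim_expr_order w_prim) expr1n.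
by rewrite -(prim_order_dvd w_prim) n_me [(e * j)%N]mulnC dvdn_pmul2r.
Qed.

(* Inclusion-exclusion: [logp2 p s = i] as a combination of [p ^ a %| s]. *)
Definition incl_excl (i a : nat) : algC :=
  match i, a with
  | 0%N, 0%N => 1 | 0%N, 1%N => -1 | 1%N, 1%N => 1 | 1%N, 2%N => -1 | 2%N, 2%N => 1
  | _, _ => 0
  end.

Lemma dvdn_p2 p s : (p ^ 2 %| s -> p %| s)%N.
Proof. by apply: dvdn_trans; rewrite -{1}(expn1 p) dvdn_exp2l. Qed.

Lemma logp2_indicator p s i : (i < 3)%N ->
  (logp2 p s == i)%N%:R = \sum_(a < 3) incl_excl i a * (p ^ a %| s)%N%:R :> algC.
Proof.
move=> i3; rewrite !big_ord_recr big_ord0 /= add0r expn0 expn1 dvd1n /logp2.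
case: (boolP (p ^ 2 %| s)%N) => h2; [have h1 := dvdn_p2 h2 | case: (boolP (p %| s)%N) => h1];
  rewrite ?h1 ?h2; case: i i3 => [|[|[|]]] //= _; ring.
Qed.

Lemma ramanujan_incl_excl p i j : (i < 3)%N ->
  \sum_(a < 3) incl_excl i a * (if (p ^ (2 - a) %| j)%N then (p ^ (2 - a))%:R else 0)
  = (ramanujan p%:Z i (logp2 p j))%:~R.
Proof.
move=> i3; rewrite !big_ord_recr big_ord0 /= add0r /logp2 !subnn !subn0 expn0 expn1 dvd1n.
case: (boolP (p ^ 2 %| j)%N) => h2; [have h1 := dvdn_p2 h2 | case: (boolP (p %| j)%N) => h1];
  rewrite ?h1 ?h2; case: i i3 => [|[|[|]]] //= _;
  rewrite /ramanujan /= ?intrB ?intrM ?intrN ?natrX; ring.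
Qed.

Lemma ramanujan_mult r u : (0 < r)%N -> (u < 3)%N -> ramanujan r u 2 = (mult r u)%:Z.
Proof.
move=> r_gt0; case: u => [|[|[|]]] // _; rewrite /ramanujan /mult /=.
- by rewrite -PoszM subzn // leq_pmulr.
- by rewrite subzn.
Qed.

Lemma pattern_decomposition (x : nat -> nat -> bool) u v : x 2%N 2%N = false ->
  (u < 3)%N -> (v < 3)%N ->
  (x u v)%:R = \sum_(ik <- pattern_index) (x ik.1 ik.2)%:R * ((u == ik.1) && (v == ik.2))%:R
  :> algC.
Proof.
move=> x22; rewrite /pattern_index !big_cons big_nil.
by case: u => [|[|[|]]] //; case: v => [|[|[|]]] //= _ _; rewrite ?x22 /=; ring.
Qed.

Lemma b2iE b : (b2i b)%:~R = b%:R :> algC.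
Proof. by case: b. Qed.

Section EigenvaluesP2Q2.

Variables p q : nat.
Hypotheses (p_pr : prime p) (q_pr : prime q) (p_neq_q : p != q).

Lemma logp2_pair_indicator i k s : (i < 3)%N -> (k < 3)%N ->
  ((logp2 p s == i) && (logp2 q s == k))%:R =
  \sum_(a < 3) \sum_(b < 3) incl_excl i a * incl_excl k b * (p ^ a * q ^ b %| s)%N%:R
  :> algC.
Proof.
move=> i3 k3; rewrite -mulnb natrM (logp2_indicator p _ i3) (logp2_indicator q _ k3).
rewrite big_distrlr /=; apply: eq_bigr => a _; apply: eq_bigr => b _.
by rewrite Gauss_dvd ?coprime_expXY // -mulnb natrM mulrACA.
Qed.

Section RootOfUnity.

Variable w : algC.
Hypothesis w_prim : (p ^ 2 * q ^ 2).-primitive_root w.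

Lemma ramanujan_sum_p2q2 i k j : (i < 3)%N -> (k < 3)%N ->
  \sum_(s < p ^ 2 * q ^ 2) ((logp2 p s == i) && (logp2 q s == k))%:R * w ^+ (s * j) =
  (ramanujan p i (logp2 p j) * ramanujan q k (logp2 q j))%:~R.
Proof.
move=> i3 k3.
under eq_bigr do rewrite logp2_pair_indicator // mulr_suml; rewrite exchange_big /=.
rewrite intrM -(ramanujan_incl_excl p j i3) -(ramanujan_incl_excl q j k3) big_distrlr /=.
apply: eq_bigr => a _; under eq_bigr do rewrite mulr_suml; rewrite exchange_big /=.
apply: eq_bigr => b _; under eq_bigr do rewrite -mulrA; rewrite -mulr_sumr sum_dvdn_root //.
- rewrite divn_p2q2 ?ltn_ord // Gauss_dvd ?coprime_expXY //.
  by case: (p ^ (2 - a) %| j)%N; case: (q ^ (2 - b) %| j)%N; rewrite /= ?natrM; ring.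
- by rewrite muln_gt0 !expn_gt0 !prime_gt0.
- by rewrite dvdn_mul // dvdn_exp2l // -ltnS.
Qed.

Variable D : {set 'I_(p ^ 2 * q ^ 2)}.
Hypothesis D_dvd : forall d, d \in D -> (val d %| p ^ 2 * q ^ 2)%N.

Lemma eigen_ICG j : \sum_(s in ICG_conn D) w ^+ (s * j) =
  (eigen p q (divisor_pattern D) (logp2 p j) (logp2 q j))%:~R.
Proof.
have x22 := divisor_pattern22 p_pr q_pr p_neq_q D_dvd.
rewrite big_mkcond /=; under eq_bigr => s _.
  rewrite mem_ICG_conn // (_ : (if _ then _ else _) =
    (divisor_pattern D (logp2 p s) (logp2 q s))%:R * w ^+ (s * j)); last first.
    by case: divisor_pattern; rewrite ?mul1r ?mul0r.
  rewrite (pattern_decomposition x22) ?logp2_lt3 // mulr_suml.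
  under eq_bigr do rewrite -mulrA.
  over.
rewrite exchange_big /eigen eigen_ofE rmorph_sum /=; apply: eq_big_seq => ik ik_idx.
have /andP[i3 k3] : (ik.1 < 3)%N && (ik.2 < 3)%N by move: ik ik_idx; apply/allP.
by rewrite -mulr_sumr ramanujan_sum_p2q2 // -mulrA !intrM b2iE.
Qed.

End RootOfUnity.

Lemma card_logp2_pair u v : (u < 3)%N -> (v < 3)%N ->
  (\sum_(s < p ^ 2 * q ^ 2) ((logp2 p s == u) && (logp2 q s == v)) = mult p u * mult q v)%N.
Proof.
move=> u3 v3.
have n_gt0 : (0 < p ^ 2 * q ^ 2)%N by rewrite muln_gt0 !expn_gt0 !prime_gt0.
have [w w_prim] := C_prim_root_exists n_gt0.
(* At j = 0 the character sum just counts the residues. *)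
have := ramanujan_sum_p2q2 w_prim 0 u3 v3.
rewrite !logp2_0 !ramanujan_mult ?prime_gt0 // -PoszM => S.
apply/eqP; rewrite -(eqr_nat algC) natr_sum -[X in _ == X]/(((mult p u * mult q v)%N)%:Z%:~R).
by rewrite -S; apply/eqP; apply: eq_bigr => s _; rewrite muln0 expr0 mulr1.
Qed.

Lemma count_eigen (x : nat -> nat -> bool) (P : pred int) :
  count P [seq eigen p q x (logp2 p j) (logp2 q j)
          | j : 'I_(p ^ 2 * q ^ 2) <- enum 'I_(p ^ 2 * q ^ 2)] = spec_count p q x P.
Proof.
rewrite count_map -sum1_count big_enum_cond /= big_mkcond /=.
transitivity (\sum_(j < p ^ 2 * q ^ 2) \sum_(u < 3) \sum_(v < 3)
   (((logp2 p j == u) && (logp2 q j == v)) * P (eigen p q x u v)))%N.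
  apply: eq_bigr => j _; rewrite !big_ord_recr !big_ord0 /=.
  case: (logp2 q j) (logp2_lt3 q j) => [|[|[|]]] //= _;
  case: (logp2 p j) (logp2_lt3 p j) => [|[|[|]]] //= _;
  by rewrite ?mul0n ?mul1n ?add0n ?addn0; case: ifP.
rewrite exchange_big; apply: eq_bigr => u _; rewrite exchange_big; apply: eq_bigr => v _.
by rewrite -big_distrl /= card_logp2_pair.
Qed.

End EigenvaluesP2Q2.

(** * Recovering the divisor pattern when p >= 3 *)

Definition same_pattern (x y : nat -> nat -> bool) :=
  forall i k, (i < 3)%N -> (k < 3)%N -> (i, k) != (2, 2)%N -> x i k = y i k.

Lemma same_pattern_sym x y : same_pattern x y -> same_pattern y x.
Proof. by move=> xy i k i3 k3 ik; rewrite xy. Qed.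

Definition transpose (x : nat -> nat -> bool) i k := x k i.

Lemma b2i_inj : injective b2i.
Proof. by case; case. Qed.

Lemma eigen_transpose p q x u v : eigen p q x u v = eigen q p (transpose x) v u.
Proof.
rewrite /eigen /eigen_of /transpose /=.
move: (ramanujan p 0 u) (ramanujan p 1 u) (ramanujan p 2 u).
move: (ramanujan q 0 v) (ramanujan q 1 v) (ramanujan q 2 v) => *; ring.
Qed.

Lemma spec_count_transpose p q x P : spec_count p q x P = spec_count q p (transpose x) P.
Proof.
rewrite /spec_count exchange_big /=; apply: eq_bigr => v _; apply: eq_bigr => u _.
by rewrite eigen_transpose [(mult p u * _)%N]mulnC.
Qed.

Lemma sum_mult p : (0 < p)%N -> (\sum_(u < 3) mult p u = p * p)%N.
Proof.
move=> p_gt0; rewrite !big_ord_recr big_ord0 /=.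
by have := leq_pmulr p p_gt0; move: (p * p)%N; lia.
Qed.

Lemma mult_gt0 p u : (1 < p)%N -> (0 < mult p u)%N.
Proof.
move=> p_gt1; case: u => [|[|u]] //=; rewrite ?subn_gt0 //.
by rewrite -{1}(mul1n p) ltn_mul2r p_gt1 (ltnW p_gt1).
Qed.

Lemma spec_count_gt0 p q y P : (0 < spec_count p q y P)%N ->
  exists u v : 'I_3, P (eigen p q y u v).
Proof.
case E: [exists u : 'I_3, exists v : 'I_3, P (eigen p q y u v)].
  by move=> _; case/existsP: E => u /existsP[v Pv]; exists u, v.
rewrite /spec_count big1 // => u _; rewrite big1 // => v _.
by move/negbT/existsPn/(_ u)/existsPn/(_ v)/negbTE: E => ->; rewrite muln0.
Qed.

Lemma ramanujan_modp (p : int) i u : (p %| ramanujan p i u - ramanujan 0 i 0)%Z.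
Proof.
case: i => [|[|i]]; case: u => [|[|u]]; rewrite /ramanujan /= ?subrr ?dvdz0 //.
- by rewrite subr0 rpredN dvdzz.
- by rewrite subr0 rpredB ?dvdz_mull.
- by rewrite opprK subrK dvdzz.
- by rewrite opprK subrK dvdzz.
Qed.

Lemma eigen_modp (p q : int) x u v : (eigen p q x u v = eigen 0 q x 0 v %[mod p])%Z.
Proof.
apply/eqP; rewrite eqz_mod_dvd /eigen !eigen_ofE -sumrB; apply: rpred_sum => ik _.
by rewrite -!mulrA -mulrBr -mulrBl dvdz_mull // dvdz_mulr // ramanujan_modp.
Qed.

Lemma spec_count_mod p q x r : (0 < p)%N ->
  spec_count p q x (fun z => (z %% p)%Z == r) =
  (p * p * \sum_(v < 3) mult q v * ((eigen 0 q x 0 v %% p)%Z == r))%N.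
Proof.
move=> p_gt0; rewrite -sum_mult // big_distrl /=; apply: eq_bigr => u _.
rewrite big_distrr /=; apply: eq_bigr => v _.
by rewrite (eigen_modp p) mulnA.
Qed.

Lemma mult_weights_inj q (a b : nat -> bool) : (3 <= q)%N ->
  (\sum_(v < 3) mult q v * a v = \sum_(v < 3) mult q v * b v)%N ->
  forall v, (v < 3)%N -> a v = b v.
Proof.
move=> q_ge3; rewrite !big_ord_recr !big_ord0 /= /mult.
have : (3 * q <= q * q)%N by rewrite leq_mul2r q_ge3 orbT.
move: (q * q)%N => qq q2 E [|[|[|]]] // _; move: E.
all: by case: (a 0%N); case: (a 1%N); case: (a 2%N);
        case: (b 0%N); case: (b 1%N); case: (b 2%N) => //= E; lia.
Qed.

Lemma spec_count_eigen0 p q x y : (0 < p)%N -> (3 <= q)%N ->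
  (forall P, spec_count p q x P = spec_count p q y P) ->
  forall v, (v < 3)%N -> (eigen 0 q x 0 v = eigen 0 q y 0 v %[mod p])%Z.
Proof.
move=> p_gt0 q_ge3 Exy v v3; set r := (eigen 0 q x 0 v %% p)%Z.
have := Exy (fun z => (z %% p)%Z == r); rewrite !spec_count_mod //.
move/eqP; rewrite eqn_pmul2l ?muln_gt0 ?p_gt0 // => /eqP E.
have := mult_weights_inj (a := fun v => (eigen 0 q x 0 v %% p)%Z == r)
                          (b := fun v => (eigen 0 q y 0 v %% p)%Z == r) q_ge3 E v3.
by rewrite eqxx => /esym/eqP.
Qed.

Lemma eigen0E q x v : eigen 0 q x 0 v =
  (b2i (x 2 0) - b2i (x 1 0)) * ramanujan q 0 v
  + (b2i (x 2 1) - b2i (x 1 1)) * ramanujan q 1 v - b2i (x 1 2) * ramanujan q 2 v.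
Proof.
rewrite /eigen /eigen_of /=.
have -> : ramanujan 0 0 0 = 0 by [].
have -> : ramanujan 0 1 0 = -1 by [].
have -> : ramanujan 0 2 0 = 1 by [].
by move: (ramanujan q 0 v) (ramanujan q 1 v) (ramanujan q 2 v) => *; ring.
Qed.

Lemma dvdz_small_eq0 (p : nat) (d : int) : `|d| < p%:Z -> (p %| d)%Z -> d = 0.
Proof.
move=> d_lt_p; rewrite dvdzE /= => /dvdn_leq.
have [->|d_neq0] := eqVneq d 0 => // /(_ _); rewrite absz_gt0 d_neq0 => /(_ isT).
by move: d_lt_p; rewrite -abszE ltz_nat; lia.
Qed.

Lemma dvdz_prime_mull (p q : nat) (z : int) : prime p -> prime q -> p != q ->
  (p %| q%:Z * z)%Z -> (p %| z)%Z.
Proof.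
move=> p_pr q_pr p_neq_q; rewrite Gauss_dvdzr // coprimezE /= prime_coprime //.
by rewrite dvdn_prime2.
Qed.

Lemma b2iB_le a b : `|b2i a - b2i b| <= 1.
Proof. by case: a; case: b. Qed.

Lemma b2iBB_le a b c d : `|(b2i a - b2i b) - (b2i c - b2i d)| <= 2.
Proof. by case: a; case: b; case: c; case: d. Qed.

Definition row_diff (x : nat -> nat -> bool) k := b2i (x 2%N k) - b2i (x 1%N k).

Section ModP.

Variables (p q : nat) (x y : nat -> nat -> bool).
Hypotheses (p_pr : prime p) (q_pr : prime q) (p_neq_q : p != q).
Hypotheses (p_ge3 : (3 <= p)%N) (q_ge3 : (3 <= q)%N).
Hypothesis same_count : forall P, spec_count p q x P = spec_count p q y P.

Let p_gt2 : 2 < p%:Z. Proof. by rewrite ltz_nat. Qed.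

Let eigen0_dvd v : (v < 3)%N -> (p %| eigen 0 q x 0 v - eigen 0 q y 0 v)%Z.
Proof.
move=> v3; rewrite -eqz_mod_dvd; apply/eqP.
by apply: spec_count_eigen0 => //; apply: prime_gt0.
Qed.

Let row_diff0 : row_diff x 0 = row_diff y 0.
Proof.
apply/eqP; rewrite -subr_eq0; apply/eqP/(dvdz_small_eq0 (le_lt_trans (b2iBB_le _ _ _ _) p_gt2)).
do 2 apply: (dvdz_prime_mull p_pr q_pr p_neq_q).
have -> : q%:Z * (q%:Z * (row_diff x 0 - row_diff y 0)) =
          (eigen 0 q x 0 2 - eigen 0 q y 0 2) - (eigen 0 q x 0 1 - eigen 0 q y 0 1).
  by rewrite !eigen0E /ramanujan /row_diff /=; ring.
by rewrite rpredB ?eigen0_dvd.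
Qed.

Let row_diff1 : row_diff x 1 = row_diff y 1.
Proof.
apply/eqP; rewrite -subr_eq0; apply/eqP/(dvdz_small_eq0 (le_lt_trans (b2iBB_le _ _ _ _) p_gt2)).
apply: (dvdz_prime_mull p_pr q_pr p_neq_q).
have -> : q%:Z * (row_diff x 1 - row_diff y 1) =
          (eigen 0 q x 0 1 - eigen 0 q y 0 1) - (eigen 0 q x 0 0 - eigen 0 q y 0 0)
          + q%:Z * (row_diff x 0 - row_diff y 0).
  by rewrite !eigen0E /ramanujan /row_diff /=; ring.
by rewrite row_diff0 subrr mulr0 addr0 rpredB ?eigen0_dvd.
Qed.

Lemma same_count_modp :
  [/\ row_diff x 0 = row_diff y 0, row_diff x 1 = row_diff y 1 & x 1%N 2%N = y 1%N 2%N].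
Proof.
split=> //; apply: b2i_inj; apply/eqP; rewrite eq_sym -subr_eq0; apply/eqP.
apply: (dvdz_small_eq0 (le_lt_trans (b2iB_le _ _) (lt_trans _ p_gt2))) => //.
have -> : b2i (y 1%N 2%N) - b2i (x 1%N 2%N) = eigen 0 q x 0 0 - eigen 0 q y 0 0.
  by rewrite !eigen0E /ramanujan /=; move: row_diff1; rewrite /row_diff; lra.
exact: eigen0_dvd.
Qed.

End ModP.

Lemma ramanujan_le (p : int) i u : 2 <= p -> `|ramanujan p i u| <= ramanujan p i 2.
Proof.
move=> p_ge2; case: i => [|[|i]]; case: u => [|[|u]]; rewrite /ramanujan /=.
all: rewrite ?normrN ?normr0 ?normr1 ?ger0_norm //; nia.
Qed.

Lemma eigen_le_degree (p q : int) x u v : 2 <= p -> 2 <= q ->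
  eigen p q x u v <= eigen p q x 2 2.
Proof.
move=> p_ge2 q_ge2; rewrite /eigen /eigen_of /=.
have term_le b i k : b2i b * ramanujan p i u * ramanujan q k v
                     <= b2i b * ramanujan p i 2 * ramanujan q k 2.
  case: b; rewrite /b2i ?mul1r ?mul0r //; apply: (le_trans (ler_norm _)).
  by rewrite normrM ler_pM ?ramanujan_le.
by repeat apply: lerD; apply: term_le.
Qed.

Lemma same_count_degree p q x y : (2 <= p)%N -> (2 <= q)%N ->
  (forall P, spec_count p q x P = spec_count p q y P) ->
  eigen p q x 2 2 = eigen p q y 2 2.
Proof.
have degree_le x' y' : (2 <= p)%N -> (2 <= q)%N ->
    (forall P, spec_count p q x' P = spec_count p q y' P) ->
    eigen p q x' 2 2 <= eigen p q y' 2 2.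
  move=> p_ge2 q_ge2 Exy.
  have : (0 < spec_count p q y' (fun z => eigen p q x' 2 2 <= z)%R)%N.
    rewrite -Exy /spec_count (bigD1 (2 : 'I_3)) //= (bigD1 (2 : 'I_3)) //= lexx.
    by rewrite -addnA ltn_addr.
  case/spec_count_gt0 => u [v] /le_trans; apply.
  by apply: eigen_le_degree; rewrite lez_nat.
move=> p_ge2 q_ge2 Exy; apply/eqP.
by rewrite eq_le !degree_le // => P; rewrite Exy.
Qed.

Lemma unit_combination_eq0 (p q a c d : int) : 3 <= p -> p < q ->
  `|a| <= 1 -> `|c| <= 1 -> `|d| <= 1 ->
  a * (p - 1) * (q - 1) + c * (q - 1) + d * (p - 1) = 0 -> [/\ a = 0, c = 0 & d = 0].
Proof.
move=> p_ge3 p_lt_q a1 c1 d1 E.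
have unit_cases (z : int) : `|z| <= 1 -> z = -1 \/ z = 0 \/ z = 1.
  by rewrite ler_norml => /andP[? ?]; lia.
have := unit_cases _ a1; have := unit_cases _ c1; have := unit_cases _ d1.
by move=> [?|[?|?]] [?|[?|?]] [?|[?|?]]; subst; split => //; nia.
Qed.

Lemma same_count_ge3 p q x y : prime p -> prime q -> (3 <= p)%N -> (p < q)%N ->
  (forall P, spec_count p q x P = spec_count p q y P) -> same_pattern x y.
Proof.
move=> p_pr q_pr p_ge3 p_lt_q Exy.
have p_neq_q : p != q by rewrite neq_ltn p_lt_q.
have q_ge3 : (3 <= q)%N := ltn_trans p_ge3 p_lt_q.
have [r20 r21 x12] := same_count_modp p_pr q_pr p_neq_q p_ge3 q_ge3 Exy.
have ExyT P : spec_count q p (transpose x) P = spec_count q p (transpose y) P.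
  by rewrite -(spec_count_transpose p q x) -(spec_count_transpose p q y).
have [r02 r12 x21] := same_count_modp q_pr p_pr (negbT (gtn_eqF p_lt_q)) q_ge3 p_ge3 ExyT.
move: r20 r02 r12 x21; rewrite /row_diff /transpose x12 => r20 r02 r12 x21.
have x11 : x 1%N 1%N = y 1%N 1%N by apply: b2i_inj; lra.
have deg := same_count_degree (ltnW p_ge3) (ltnW q_ge3) Exy.
set a := b2i (x 0%N 0%N) - b2i (y 0%N 0%N).
set c := b2i (x 1%N 0%N) - b2i (y 1%N 0%N).
set d := b2i (x 0%N 1%N) - b2i (y 0%N 1%N).
have : p%:Z * q%:Z * (a * (p%:Z - 1) * (q%:Z - 1) + c * (q%:Z - 1) + d * (p%:Z - 1)) = 0.
  rewrite -(subrr (eigen p q y 2 2)) -[X in _ = X - _]deg /eigen /eigen_of /ramanujan /=.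
  have -> : b2i (x 2%N 0%N) = c + b2i (y 2%N 0%N) by rewrite /c; lra.
  have -> : b2i (x 0%N 2%N) = d + b2i (y 0%N 2%N) by rewrite /d; lra.
  by rewrite x11 x12 x21 /a /c /d; ring.
have pq_neq0 : p%:Z * q%:Z != 0 by rewrite mulf_neq0 // lt0r_neq0 // ltz_nat prime_gt0.
move/eqP; rewrite mulf_eq0 (negbTE pq_neq0) /= => /eqP E.
have [] := unit_combination_eq0 _ _ (b2iB_le _ _) (b2iB_le _ _) (b2iB_le _ _) E.
- by rewrite lez_nat.
- by rewrite ltz_nat.
move=> /eqP; rewrite subr_eq0 => /eqP/b2i_inj x00.
move=> /eqP; rewrite subr_eq0 => /eqP/b2i_inj x10.
move=> /eqP; rewrite subr_eq0 => /eqP/b2i_inj x01.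
have x20 : x 2%N 0%N = y 2%N 0%N by apply: b2i_inj; rewrite x10 in r20; lra.
have x02 : x 0%N 2%N = y 0%N 2%N by apply: b2i_inj; rewrite x01 in r02; lra.
by move=> [|[|[|i]]] [|[|[|k]]].
Qed.

(** * Recovering the divisor pattern when p = 2 *)

Lemma eq_eigen_of a b x y : same_pattern x y -> eigen_of a b x =2 eigen_of a b y.
Proof. by move=> xy u v; rewrite /eigen_of /= !xy. Qed.

Fixpoint all_bools n : seq (seq bool) :=
  if n is n'.+1 then [seq b :: s | b <- [:: false; true], s <- all_bools n'] else [:: [::]].

Lemma mem_all_bools s : s \in all_bools (size s).
Proof.
elim: s => [|b s IH] //; apply/allpairsP; exists (b, s) => /=.
by rewrite IH; case: b.
Qed.

Definition pattern_bits (x : nat -> nat -> bool) : seq bool :=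
  [seq x ik.1 ik.2 | ik <- pattern_index].

Definition pattern_of (s : seq bool) (i k : nat) : bool := nth false s (3 * i + k).

Lemma pattern_of_bits x : same_pattern (pattern_of (pattern_bits x)) x.
Proof. by move=> [|[|[|i]]] [|[|[|k]]]. Qed.

Lemma pattern_bits_inj x y : pattern_bits x = pattern_bits y -> same_pattern x y.
Proof.
move=> xy i k i3 k3 ik; rewrite -(pattern_of_bits x) // -(pattern_of_bits y) //.
by rewrite xy.
Qed.

Definition pairs3 : seq (nat * nat) := [seq (u, v) | u <- iota 0 3, v <- iota 0 3].

Lemma mem_pairs3 (u v : 'I_3) : (nat_of_ord u, nat_of_ord v) \in pairs3.
Proof. by case: u => [[|[|[|u]]]] //= _; case: v => [[|[|[|v]]]]. Qed.

Lemma pairs3P uv : uv \in pairs3 -> exists u v : 'I_3, uv = (nat_of_ord u, nat_of_ord v).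
Proof.
case/allpairsP => -[u v] [u3 v3 ->]; rewrite mem_iota in u3; rewrite mem_iota in v3.
by exists (Ordinal u3), (Ordinal v3).
Qed.

Definition eigen_values (q : int) (x : nat -> nat -> bool) : seq int :=
  [seq eigen 2 q x uv.1 uv.2 | uv <- pairs3].

Definition eigen_subset (p q : int) (x y : nat -> nat -> bool) :=
  forall u v : 'I_3, exists u' v' : 'I_3, eigen p q x u v = eigen p q y u' v'.

Definition same_values (s t : seq int) : bool := all (mem t) s && all (mem s) t.

Definition values_separate (q : int) : bool :=
  all2rel (fun a b : seq bool * seq int => same_values a.2 b.2 ==> (a.1 == b.1))
    [seq (s, eigen_values q (pattern_of s)) | s <- all_bools 8].

Lemma eigen_values_subset q x y :
  eigen_subset 2 q x y -> all (mem (eigen_values q y)) (eigen_values q x).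
Proof.
move=> xy; apply/allP => _ /mapP[_ /pairs3P[u [v ->]] ->] /=.
have [u' [v' ->]] := xy u v; exact: (map_f _ (mem_pairs3 u' v')).
Qed.

Lemma values_separate_pattern q x y : values_separate q ->
  eigen_subset 2 q x y -> eigen_subset 2 q y x -> same_pattern x y.
Proof.
move=> sep xy yx; apply: pattern_bits_inj.
have values_bits z : eigen_values q (pattern_of (pattern_bits z)) = eigen_values q z.
  by apply: eq_map => uv; apply: eq_eigen_of; apply: pattern_of_bits.
have mem_bits z : pattern_bits z \in all_bools 8.
  by rewrite -[8%N]/(size (pattern_bits z)) mem_all_bools.
have := allrelP sep _ _ (map_f _ (mem_bits x)) (map_f _ (mem_bits y)).
by rewrite /= !values_bits /same_values !eigen_values_subset // => /eqP.
Qed.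

Definition ramanujan_coef (j k v : nat) : int :=
  nth 0 (match k, v with
         | 0%N, 0%N => [:: 0; 0; 0] | 0%N, 1%N => [:: 0; -1; 0] | 0%N, _ => [:: 0; -1; 1]
         | 1%N, 0%N => [:: -1; 0; 0] | 1%N, _ => [:: -1; 1; 0]
         | _, _ => [:: 1; 0; 0]
         end) j.

Lemma ramanujan_expand (t : int) k v :
  ramanujan t k v = \sum_(j < 3) ramanujan_coef j k v * t ^+ j.
Proof.
rewrite !big_ord_recr big_ord0 /=.
by case: k => [|[|k]]; case: v => [|[|v]]; rewrite /ramanujan /ramanujan_coef /=; ring.
Qed.

Definition eigen2_coef (j : nat) := eigen_of (ramanujan 2) (ramanujan_coef j).

Lemma eigen2_expand (t : int) x u v :
  eigen 2 t x u v = \sum_(j < 3) eigen2_coef j x u v * t ^+ j.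
Proof.
rewrite /eigen /eigen2_coef /eigen_of !ramanujan_expand !big_ord_recr !big_ord0 /=.
by ring.
Qed.

Definition coef_bounded : bool :=
  all (fun s => all (fun j => all (fun uv =>
         (absz (eigen2_coef j (pattern_of s) uv.1 uv.2) <= 4)%N) pairs3) (iota 0 3))
    (all_bools 8).

Lemma coef_boundedP x j (u v : 'I_3) : coef_bounded -> (j < 3)%N ->
  (absz (eigen2_coef j x u v) <= 4)%N.
Proof.
move=> /allP /(_ (pattern_bits x)) bnd j3.
rewrite /eigen2_coef -(eq_eigen_of _ _ (pattern_of_bits x)).
move: bnd; rewrite -[8%N]/(size (pattern_bits x)) mem_all_bools => /(_ isT) /allP.
by move=> /(_ j); rewrite mem_iota => /(_ j3) /allP /(_ _ (mem_pairs3 u v)).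
Qed.

Lemma expand3_inj (t : int) (c d : nat -> int) : 9 <= t ->
  (forall j, (j < 3)%N -> absz (c j) <= 4)%N ->
  (forall j, (j < 3)%N -> absz (d j) <= 4)%N ->
  \sum_(j < 3) c j * t ^+ j = \sum_(j < 3) d j * t ^+ j ->
  forall j, (j < 3)%N -> c j = d j.
Proof.
move=> t9 cb db; rewrite !big_ord_recr !big_ord0 /= !add0r expr0 expr1 !mulr1 => E.
have := cb 0%N isT; have := cb 1%N isT; have := cb 2%N isT.
have := db 0%N isT; have := db 1%N isT; have := db 2%N isT.
move=> bd2 bd1 bd0 bc2 bc1 bc0.
have e2 : c 2%N = d 2%N by nia.
have e1 : c 1%N = d 1%N by rewrite e2 in E; nia.
have e0 : c 0%N = d 0%N by rewrite e1 e2 in E; lia.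
by case=> [|[|[|]]].
Qed.

Lemma coef_bounded_true : coef_bounded.
Proof. by vm_compute. Qed.

Lemma eigen_subset_transfer (q t : int) x y : 9 <= q ->
  eigen_subset 2 q x y -> eigen_subset 2 t x y.
Proof.
move=> q9 xy u v; have [u' [v' E]] := xy u v; exists u', v'.
rewrite !eigen2_expand in E *; apply: eq_bigr => j _; congr (_ * _).
have bnd z (u0 v0 : 'I_3) j' : (j' < 3)%N -> (absz (eigen2_coef j' z u0 v0) <= 4)%N.
  exact: coef_boundedP coef_bounded_true.
exact: (expand3_inj (c := fun j => eigen2_coef j x u v) (d := fun j => eigen2_coef j y u' v')
          q9 (bnd x u v) (bnd y u' v') E).
Qed.

Lemma same_count_subset p q x y : (1 < p)%N -> (1 < q)%N ->
  (forall P, spec_count p q x P = spec_count p q y P) -> eigen_subset p q x y.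
Proof.
move=> p_gt1 q_gt1 Exy u v.
have : (0 < spec_count p q y (pred1 (eigen p q x u v)))%N.
  rewrite -Exy /spec_count (bigD1 u) //= (bigD1 v) //= eqxx muln1.
  by rewrite -addnA ltn_addr // muln_gt0 !mult_gt0.
by case/spec_count_gt0 => u' [v'] /eqP E; exists u', v'.
Qed.

Lemma values_separate3 : values_separate 3. Proof. by vm_compute. Qed.
Lemma values_separate5 : values_separate 5. Proof. by vm_compute. Qed.
Lemma values_separate7 : values_separate 7. Proof. by vm_compute. Qed.
Lemma values_separate11 : values_separate 11. Proof. by vm_compute. Qed.

Lemma same_count_2 q x y : prime q -> (2 < q)%N ->
  (forall P, spec_count 2 q x P = spec_count 2 q y P) -> same_pattern x y.
Proof.
move=> q_pr q_gt2 Exy.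
have xy := same_count_subset (isT : (1 < 2)%N) (ltnW q_gt2) Exy.
have yx := same_count_subset (isT : (1 < 2)%N) (ltnW q_gt2) (fun P => esym (Exy P)).
have [q_lt11 | q_ge11] := ltnP q 11.
  have : q \in [:: 3; 5; 7]%N.
    by move: q_pr q_gt2 q_lt11; clear Exy xy yx; do 11! case: q => [|q] //.
  rewrite !inE => /or3P[] /eqP q_val; subst q; apply: values_separate_pattern xy yx.
  - exact: values_separate3.
  - exact: values_separate5.
  - exact: values_separate7.
have q9 : 9 <= q%:Z by rewrite lez_nat; apply: leq_trans q_ge11.
apply: (values_separate_pattern values_separate11); exact: eigen_subset_transfer q9 _.
Qed.

Lemma same_count_pattern p q x y : prime p -> prime q -> (p < q)%N ->
  (forall P, spec_count p q x P = spec_count p q y P) -> same_pattern x y.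
Proof.
move=> p_pr q_pr p_lt_q Exy.
case: (ltngtP p 2) (prime_gt1 p_pr) => [|p_gt2 _|p2 _] //.
- exact: same_count_ge3 p_pr q_pr p_gt2 p_lt_q Exy.
- by subst p; exact: same_count_2 q_pr p_lt_q Exy.
Qed.

Section SpectrumP2Q2.

Variables p q : nat.
Hypotheses (p_pr : prime p) (q_pr : prime q) (p_neq_q : p != q).

Lemma Spec_ICG_p2q2 (D : {set 'I_(p ^ 2 * q ^ 2)}) :
  (forall d, d \in D -> (val d %| p ^ 2 * q ^ 2)%N) ->
  forall z, Spec (ICG_adj D) z = count_mem z [seq k%:~R | k <-
    [seq eigen p q (divisor_pattern D) (logp2 p j) (logp2 q j)
    | j : 'I_(p ^ 2 * q ^ 2) <- enum 'I_(p ^ 2 * q ^ 2)]].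
Proof.
move=> D_dvd z.
have n_gt0 : (0 < p ^ 2 * q ^ 2)%N by rewrite muln_gt0 !expn_gt0 !prime_gt0.
have [w w_prim] := C_prim_root_exists n_gt0.
rewrite (Spec_ICG_adj n_gt0 w_prim) -map_comp; congr (count_mem z _); apply: eq_map => j.
exact: eigen_ICG.
Qed.

Lemma Spec_eq_spec_count (D1 D2 : {set 'I_(p ^ 2 * q ^ 2)}) :
  (forall d, d \in D1 -> (val d %| p ^ 2 * q ^ 2)%N) ->
  (forall d, d \in D2 -> (val d %| p ^ 2 * q ^ 2)%N) ->
  Spec (ICG_adj D1) = Spec (ICG_adj D2) ->
  forall P, spec_count p q (divisor_pattern D1) P = spec_count p q (divisor_pattern D2) P.
Proof.
move=> D1_dvd D2_dvd E12 P; rewrite -!(count_eigen p_pr q_pr p_neq_q); apply/permP.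
apply: (perm_map_inj (@intr_inj algC)); apply/allP => z _ /=.
by apply/eqP; rewrite -!Spec_ICG_p2q2 // E12.
Qed.

Lemma same_pattern_subset (D1 D2 : {set 'I_(p ^ 2 * q ^ 2)}) :
  (forall d, d \in D1 -> (val d %| p ^ 2 * q ^ 2)%N) ->
  (forall d, d \in D2 -> (val d %| p ^ 2 * q ^ 2)%N) ->
  same_pattern (divisor_pattern D1) (divisor_pattern D2) -> D1 \subset D2.
Proof.
move=> D1_dvd D2_dvd E12; apply/subsetP => d dD1.
have pat1 : divisor_pattern D1 (logp2 p d) (logp2 q d).
  by apply/existsP; exists d; rewrite dD1 !eqxx.
apply: (mem_divisor_pattern p_pr q_pr p_neq_q D2_dvd (D1_dvd d dD1)).
rewrite -E12 ?logp2_lt3 //; apply: contraTneq pat1 => -[-> ->].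
by rewrite (divisor_pattern22 p_pr q_pr p_neq_q D1_dvd).
Qed.

End SpectrumP2Q2.

Theorem theorem1p4 (p q : nat) (D1 D2 : {set 'I_(p ^ 2 * q ^ 2)}) :
  prime p -> prime q -> (p < q)%N ->
  (forall d, d \in D1 -> (val d %| p ^ 2 * q ^ 2)%N) ->
  (forall d, d \in D2 -> (val d %| p ^ 2 * q ^ 2)%N) ->
  Spec (ICG_adj D1) = Spec (ICG_adj D2) ->
  D1 = D2.
Proof.
move=> p_pr q_pr p_lt_q D1_dvd D2_dvd E12.
have p_neq_q : p != q by rewrite neq_ltn p_lt_q.
have same_count := Spec_eq_spec_count p_pr q_pr p_neq_q D1_dvd D2_dvd E12.
have E := same_count_pattern p_pr q_pr p_lt_q same_count.
apply/eqP; rewrite eqEsubset !(same_pattern_subset p_pr q_pr p_neq_q) //.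
exact: same_pattern_sym.
Qed.
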